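(* Let $X$ be a locally solid $f$-algebra with a multiplicative unit $e$. If either $Orth_b(X)$ (with the topology of uniform convergence on bounded sets) or $Orth_c(X)$ (with the topology of equicontinuous convergence) possesses the Lebesgue property, then $X$ possesses the Lebesgue property.
   Context: All vector lattices are Archimedean. An $f$-algebra is a Riesz algebra such that $x\wedge y=0$ implies $zx\wedge y=xz\wedge y=0$ for every $z\ge0$; a locally solid $f$-algebra is an $f$-algebra with a linear topology having a base of solid zero neighborhoods. An orthomorphism is an order bounded linear operator $T$ with $T(x)\perp y$ whenever $x\perp y$ ($x\perp y$ means $|x|\wedge|y|=0$). $Orth_b(X)$: orthomorphisms mapping bounded sets to bounded sets, with $S_\alpha\to0$ iff for every bounded $B$ and zero neighborhood $V$ there is $\alpha_0$ with $S_\alpha(B)\subseteq V$ for $\alpha\ge\alpha_0$. $Orth_c(X)$: continuous orthomorphisms, with $S_\alpha\to0$ iff for every zero neighborhood $V$ there is a zero neighborhood $U$ such that for every $\varepsilon>0$ there is $\alpha_0$ with $S_\alpha(U)\subseteq\varepsilon V$ for $\alpha\ge\alpha_0$. A locally solid vector lattice $(E,\tau)$ has the Lebesgue property if for every net $(u_\alpha)$ in $E$, $u_\alpha\downarrow 0$ implies $u_\alpha\to0$ in $\tau$. *)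

(* The lattice order, lattice join, multiplication and the (locally solid)
   linear topology are given explicitly, the topology through a base of zero
   neighbourhoods, exactly as in the paper's definitions. *)
From HB Require Import structures.
From mathcomp Require Import all_boot all_order all_algebra.
From mathcomp Require Import boolp classical_sets reals.

Set Implicit Arguments.
Unset Strict Implicit.
Unset Printing Implicit Defensive.

Import Order.TTheory GRing.Theory Num.Theory.
Local Open Scope ring_scope.
Local Open Scope classical_set_scope.

Section VectorLattice.
Variables (R : realType) (X : lmodType R).
Variables (le : X -> X -> Prop) (join : X -> X -> X).

Definition lmeet (x y : X) : X := - join (- x) (- y).
Definition labs (x : X) : X := join x (- x).
Definition ldisj (x y : X) : Prop := lmeet (labs x) (labs y) = 0.

Definition is_archimedean_vector_lattice : Prop :=
  (forall x, le x x) /\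
      (forall x y z, le x y -> le y z -> le x z) /\
      (forall x y, le x y -> le y x -> x = y) /\
      (forall x y z, le x y -> le (x + z) (y + z)) /\
      (forall (a : R) x y, 0 <= a -> le x y -> le (a *: x) (a *: y)) /\
      (forall x y, le x (join x y) /\ le y (join x y)
                   /\ forall z, le x z -> le y z -> le (join x y) z) /\
      (forall x y, le 0 x -> (forall n : nat, le (n%:R *: x) y) -> x = 0).

Definition is_f_algebra (mul : X -> X -> X) : Prop :=
  is_archimedean_vector_lattice /\
      (forall (a : R) x y z, mul (a *: x + y) z = a *: mul x z + mul y z) /\
      (forall (a : R) x y z, mul z (a *: x + y) = a *: mul z x + mul z y) /\
      (forall x y z, mul x (mul y z) = mul (mul x y) z) /\
      (forall x y, le 0 x -> le 0 y -> le 0 (mul x y)) /\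
      (forall x y z, lmeet x y = 0 -> le 0 z ->
          lmeet (mul z x) y = 0 /\ lmeet (mul x z) y = 0).

Variable N : set (set X).

Definition solid (U : set X) : Prop :=
  forall x y, U x -> le (labs y) (labs x) -> U y.

(* N is a base of zero neighbourhoods of a linear topology consisting of
   solid sets (solid sets are balanced) *)
Definition is_locally_solid_base : Prop :=
  (exists U, N U) /\
      (forall U, N U -> U 0) /\
      (forall U V, N U -> N V -> exists W, N W /\ W `<=` U `&` V) /\
      (forall U, N U -> exists V, N V /\ forall x y, V x -> V y -> U (x + y)) /\
      (forall U x, N U -> exists t : R, 0 < t /\
                     forall l : R, `|l| <= t -> U (l *: x)) /\
      (forall U, N U -> solid U).

Definition nbhd0 (V : set X) : Prop := exists U, N U /\ U `<=` V.

Definition tbounded (B : set X) : Prop :=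
  forall V, nbhd0 V -> exists t : R, 0 < t /\ forall x, B x -> V (t *: x).

Definition directed (I : Type) (leI : I -> I -> Prop) : Prop :=
  inhabited I /\ (forall i, leI i i) /\
      (forall i j k, leI i j -> leI j k -> leI i k) /\
      (forall i j, exists k, leI i k /\ leI j k).

Definition net_conv0 (I : Type) (leI : I -> I -> Prop) (u : I -> X) : Prop :=
  forall V, nbhd0 V -> exists a0, forall a, leI a0 a -> V (u a).

Definition lebesgue_property : Prop :=
  forall (I : Type) (leI : I -> I -> Prop) (u : I -> X),
    directed leI ->
    (forall a b, leI a b -> le (u b) (u a)) ->
    (forall a, le 0 (u a)) ->
    (forall z, (forall a, le z (u a)) -> le z 0) ->
    net_conv0 leI u.

Definition is_orthomorphism (T : X -> X) : Prop :=
  (forall (a : R) x y, T (a *: x + y) = a *: T x + T y) /\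
      (forall a b, exists c d, forall z, le a z -> le z b ->
                   le c (T z) /\ le (T z) d) /\
      (forall x y, ldisj x y -> ldisj (T x) y).

Definition Orth_b (T : X -> X) : Prop :=
  is_orthomorphism T /\ forall B, tbounded B -> tbounded (T @` B).

(* continuity of a linear map = continuity at 0 *)
Definition Orth_c (T : X -> X) : Prop :=
  is_orthomorphism T /\
  forall V, nbhd0 V -> exists U, nbhd0 U /\ T @` U `<=` V.

Definition orth_le (S T : X -> X) : Prop :=
  forall x, le 0 x -> le (S x) (T x).

Definition orth0 : X -> X := fun _ => 0.

Definition orth_b_conv0 (I : Type) (leI : I -> I -> Prop) (S : I -> X -> X)
  : Prop :=
  forall B V, tbounded B -> nbhd0 V ->
    exists a0, forall a, leI a0 a -> S a @` B `<=` V.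

Definition orth_c_conv0 (I : Type) (leI : I -> I -> Prop) (S : I -> X -> X)
  : Prop :=
  forall V, nbhd0 V -> exists U, nbhd0 U /\
    forall eps : R, 0 < eps -> exists a0, forall a, leI a0 a ->
      S a @` U `<=` [set eps *: v | v in V].

(* Lebesgue property of a space of orthomorphisms P (= Orth_b or Orth_c)
   with convergence conv; infima are taken in P *)
Definition orth_lebesgue (P : (X -> X) -> Prop)
  (conv : forall I : Type, (I -> I -> Prop) -> (I -> X -> X) -> Prop) : Prop :=
  forall (I : Type) (leI : I -> I -> Prop) (S : I -> X -> X),
    directed leI ->
    (forall a, P (S a)) ->
    (forall a b, leI a b -> orth_le (S b) (S a)) ->
    (forall a, orth_le orth0 (S a)) ->
    (forall T, P T -> (forall a, orth_le T (S a)) -> orth_le T orth0) ->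
    conv I leI S.

End VectorLattice.

(* Let u_a decrease to 0 in the unital f-algebra X and fix s > 0.  The
   truncations v_a := (u_a / s) /\ e satisfy 0 <= v_a <= e, so the
   multiplication operators y |-> v_a y are orthomorphisms lying in both
   Orth_b(X) and Orth_c(X); they decrease, and their infimum in Orth(X) is 0
   because  v_a y <= c v_a + c^-1 y^2  for every c > 0.  The Lebesgue property
   of Orth_b or Orth_c therefore forces v_a (s e) = s v_a -> 0.  Finally
   u_a = s v_a + s (u_a/s - e)^+ <= s v_a + s^-1 u_a^2 <= s v_a + s^-1 x^2
   with x = u_a0, so choosing s large makes u_a eventually small. *)
From HB Require Import structures.
From mathcomp Require Import all_boot all_order all_algebra.
From mathcomp Require Import boolp classical_sets reals.

Set Implicit Arguments.
Unset Strict Implicit.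
Unset Printing Implicit Defensive.
Import Order.TTheory GRing.Theory Num.Theory.
Local Open Scope ring_scope.
Local Open Scope classical_set_scope.

Section VectorLattice.
Variables (R : realType) (X : lmodType R) (le : X -> X -> Prop) (join : X -> X -> X).
Hypothesis HV : is_archimedean_vector_lattice le join.

Lemma vl_refl x : le x x. Proof. by case: HV. Qed.
Lemma vl_trans x y z : le x y -> le y z -> le x z.
Proof. by case: HV => _ [H _]; apply: H. Qed.
Lemma vl_anti x y : le x y -> le y x -> x = y.
Proof. by case: HV => _ [_ [H _]]; apply: H. Qed.
Lemma vl_addr x y z : le x y -> le (x + z) (y + z).
Proof. by case: HV => _ [_ [_ [H _]]]; apply: H. Qed.
Lemma vl_scale (a : R) x y : 0 <= a -> le x y -> le (a *: x) (a *: y).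
Proof. by case: HV => _ [_ [_ [_ [H _]]]]; apply: H. Qed.
Lemma join_ubl x y : le x (join x y).
Proof. by case: HV => _ [_ [_ [_ [_ [H _]]]]]; case: (H x y). Qed.
Lemma join_ubr x y : le y (join x y).
Proof. by case: HV => _ [_ [_ [_ [_ [H _]]]]]; case: (H x y) => _ []. Qed.
Lemma join_lub x y z : le x z -> le y z -> le (join x y) z.
Proof. by case: HV => _ [_ [_ [_ [_ [H _]]]]]; case: (H x y) => _ [] _; apply. Qed.
Lemma vl_archimedean x y : le 0 x -> (forall n : nat, le (n%:R *: x) y) -> x = 0.
Proof. by case: HV => _ [_ [_ [_ [_ [_ H]]]]]; apply: H. Qed.

Lemma vl_addl x y z : le x y -> le (z + x) (z + y).
Proof. by move=> h; rewrite ![z + _]addrC; apply: vl_addr. Qed.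
Lemma vl_subP x y : le x y <-> le 0 (y - x).
Proof.
split=> h; first by have := vl_addr (- x) h; rewrite subrr.
by have := vl_addr x h; rewrite add0r subrK.
Qed.
Lemma vl_subl x y w : le x (y + w) <-> le (x - w) y.
Proof.
split=> h; first by have := vl_addr (- w) h; rewrite addrK.
by have := vl_addr w h; rewrite subrK.
Qed.
Lemma vl_opp x y : le x y -> le (- y) (- x).
Proof.
move=> h; have := vl_addr (- x - y) h.
by rewrite addrA subrr add0r addrCA subrr addr0.
Qed.
Lemma vl_add2 a b c d : le a b -> le c d -> le (a + c) (b + d).
Proof. by move=> h1 h2; apply: vl_trans (vl_addr c h1) (vl_addl b h2). Qed.
Lemma vl_scale_ge0 (a : R) x : 0 <= a -> le 0 x -> le 0 (a *: x).
Proof. by move=> ha hx; have := vl_scale ha hx; rewrite scaler0. Qed.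

Lemma join_comm x y : join x y = join y x.
Proof. by apply: vl_anti; apply: join_lub; (apply: join_ubl || apply: join_ubr). Qed.
Lemma join_addr a b c : join (a + c) (b + c) = join a b + c.
Proof.
apply: vl_anti.
  by apply: join_lub; apply: vl_addr; [apply: join_ubl | apply: join_ubr].
have h : le (join a b) (join (a + c) (b + c) - c).
  apply: join_lub.
  - by have := vl_addr (- c) (join_ubl (a + c) (b + c)); rewrite addrK.
  - by have := vl_addr (- c) (join_ubr (a + c) (b + c)); rewrite addrK.
by have := vl_addr c h; rewrite subrK.
Qed.

Lemma meet_lbl x y : le (lmeet join x y) x.
Proof. by rewrite /lmeet; have := vl_opp (join_ubl (- x) (- y)); rewrite opprK. Qed.
Lemma meet_lbr x y : le (lmeet join x y) y.
Proof. by rewrite /lmeet; have := vl_opp (join_ubr (- x) (- y)); rewrite opprK. Qed.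
Lemma meet_glb x y z : le z x -> le z y -> le z (lmeet join x y).
Proof.
move=> h1 h2; rewrite /lmeet.
by have := vl_opp (join_lub (vl_opp h1) (vl_opp h2)); rewrite opprK.
Qed.
Lemma meet_comm x y : lmeet join x y = lmeet join y x.
Proof. by rewrite /lmeet join_comm. Qed.
Lemma meet_id x : lmeet join x x = x.
Proof.
rewrite /lmeet.
have -> : join (- x) (- x) = - x.
  by apply: vl_anti; [apply: join_lub; apply: vl_refl | apply: join_ubl].
by rewrite opprK.
Qed.
Lemma meet_mono a b c d : le a c -> le b d -> le (lmeet join a b) (lmeet join c d).
Proof.
move=> h1 h2; apply: meet_glb.
  exact: vl_trans (meet_lbl _ _) h1.
exact: vl_trans (meet_lbr _ _) h2.
Qed.

Lemma abs_ge0 x : le 0 (labs join x).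
Proof.
have h := vl_add2 (join_ubl x (- x)) (join_ubr x (- x)); rewrite subrr in h.
have h2 : (0 : R) <= 2^-1 by rewrite invr_ge0.
have := vl_scale h2 h; rewrite scaler0 -mulr2n -scaler_nat scalerA mulVf ?scale1r //.
by rewrite pnatr_eq0.
Qed.
Lemma abs_id x : le 0 x -> labs join x = x.
Proof.
move=> h; apply: vl_anti; last exact: join_ubl.
apply: join_lub; first exact: vl_refl.
by apply: vl_trans (h); have := vl_opp h; rewrite oppr0.
Qed.

Lemma disj_le a b c : le 0 a -> le a b -> le 0 c -> lmeet join b c = 0 ->
  lmeet join a c = 0.
Proof.
move=> ha hab hc hb; apply: vl_anti; last exact: meet_glb.
by rewrite -hb; apply: meet_mono => //; exact: vl_refl.
Qed.

Definition ppart (x : X) : X := join x 0.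

Lemma ppart_ge0 x : le 0 (ppart x). Proof. exact: join_ubr. Qed.
Lemma ppart_ub x : le x (ppart x). Proof. exact: join_ubl. Qed.
Lemma ppartN x : ppart (- x) = ppart x - x.
Proof. by rewrite /ppart -join_addr subrr add0r join_comm. Qed.
Lemma ppart_sub x : ppart x - ppart (- x) = x.
Proof. by rewrite ppartN opprB addrC subrK. Qed.
Lemma ppart_disj x : lmeet join (ppart x) (ppart (- x)) = 0.
Proof.
rewrite /lmeet ppartN opprB.
have -> : join (- ppart x) (x - ppart x) = join 0 x - ppart x.
  by rewrite -join_addr add0r.
by rewrite join_comm subrr oppr0.
Qed.

Lemma sub_meet r e : r - lmeet join r e = ppart (r - e).
Proof.
rewrite /lmeet opprK addrC -join_addr addNr [- e + r]addrC.
exact: join_comm.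
Qed.

Lemma le0_of_small z w : le 0 w ->
  (forall m : nat, le z (m.+1%:R^-1 *: w)) -> le z 0.
Proof.
move=> hw hz.
have hp : ppart z = 0.
  apply: (@vl_archimedean _ w (ppart_ge0 z)) => -[|m]; first by rewrite scale0r.
  have h : le (ppart z) (m.+1%:R^-1 *: w).
    by apply: join_lub => //; apply: vl_scale_ge0; rewrite ?invr_ge0.
  have := vl_scale (ler0n _ m.+1) h.
  by rewrite scalerA mulfV ?scale1r // pnatr_eq0.
by rewrite -hp; exact: ppart_ub.
Qed.

Section FAlgebra.
Variables (mul : X -> X -> X) (e : X).
Hypothesis HF : is_f_algebra le join mul.
Hypothesis He : forall x, mul e x = x /\ mul x e = x.

Lemma mull_lin a x y z : mul (a *: x + y) z = a *: mul x z + mul y z.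
Proof. by case: HF => _ [H _]; apply: H. Qed.
Lemma mulr_lin a x y z : mul z (a *: x + y) = a *: mul z x + mul z y.
Proof. by case: HF => _ [_ [H _]]; apply: H. Qed.
Lemma mul_ge0 x y : le 0 x -> le 0 y -> le 0 (mul x y).
Proof. by case: HF => _ [_ [_ [_ [H _]]]]; apply: H. Qed.
Lemma mul_disj x y z : lmeet join x y = 0 -> le 0 z ->
  lmeet join (mul z x) y = 0 /\ lmeet join (mul x z) y = 0.
Proof. by case: HF => _ [_ [_ [_ [_ H]]]]; apply: H. Qed.
Lemma mul1x x : mul e x = x. Proof. by case: (He x). Qed.
Lemma mulx1 x : mul x e = x. Proof. by case: (He x). Qed.

Lemma mulx0 z : mul z 0 = 0.
Proof.
have := mulr_lin 1 0 0 z; rewrite !scale1r addr0 => h.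
by have := congr1 (fun t => t - mul z 0) h; rewrite subrr addrK => <-.
Qed.
Lemma mul0x z : mul 0 z = 0.
Proof.
have := mull_lin 1 0 0 z; rewrite !scale1r addr0 => h.
by have := congr1 (fun t => t - mul 0 z) h; rewrite subrr addrK => <-.
Qed.
Lemma mulxD z x y : mul z (x + y) = mul z x + mul z y.
Proof. by have := mulr_lin 1 x y z; rewrite !scale1r. Qed.
Lemma mulDx z x y : mul (x + y) z = mul x z + mul y z.
Proof. by have := mull_lin 1 x y z; rewrite !scale1r. Qed.
Lemma mulxZ z a x : mul z (a *: x) = a *: mul z x.
Proof. by have := mulr_lin a x 0 z; rewrite !addr0 mulx0 addr0. Qed.
Lemma mulZx z a x : mul (a *: x) z = a *: mul x z.
Proof. by have := mull_lin a x 0 z; rewrite !addr0 mul0x addr0. Qed.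
Lemma mulxN z x : mul z (- x) = - mul z x.
Proof. by rewrite -scaleN1r mulxZ scaleN1r. Qed.
Lemma mulNx z x : mul (- x) z = - mul x z.
Proof. by rewrite -scaleN1r mulZx scaleN1r. Qed.
Lemma mulxB z x y : mul z (x - y) = mul z x - mul z y.
Proof. by rewrite mulxD mulxN. Qed.
Lemma mulBx z x y : mul (x - y) z = mul x z - mul y z.
Proof. by rewrite mulDx mulNx. Qed.

Lemma mul_monor z x y : le 0 z -> le x y -> le (mul z x) (mul z y).
Proof. by move=> hz /vl_subP h; apply/vl_subP; rewrite -mulxB; apply: mul_ge0. Qed.
Lemma mul_monol z x y : le 0 z -> le x y -> le (mul x z) (mul y z).
Proof. by move=> hz /vl_subP h; apply/vl_subP; rewrite -mulBx; apply: mul_ge0. Qed.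

Lemma disj_mul0 x y : le 0 x -> le 0 y -> lmeet join x y = 0 -> mul x y = 0.
Proof.
move=> hx hy h.
have h1 : lmeet join (mul x y) y = 0 by case: (mul_disj h hy).
rewrite meet_comm in h1.
by have [h2 _] := mul_disj h1 hx; rewrite meet_id in h2.
Qed.

(* Squares are positive: y^2 = (y^+)^2 + (y^-)^2 as the cross terms vanish. *)
Lemma sq_ge0 y : le 0 (mul y y).
Proof.
rewrite -{1 2}(ppart_sub y).
set p := ppart y; set q := ppart (- y).
have hp : le 0 p by exact: ppart_ge0.
have hq : le 0 q by exact: ppart_ge0.
have hpq : mul p q = 0 by apply: disj_mul0 => //; exact: ppart_disj.
have hqp : mul q p = 0 by apply: disj_mul0 => //; rewrite meet_comm; exact: ppart_disj.
rewrite mulxB !mulBx hpq hqp subr0 sub0r opprK.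
by have := vl_add2 (mul_ge0 hp hp) (mul_ge0 hq hq); rewrite addr0.
Qed.

Lemma unit_ge0 : le 0 e. Proof. by rewrite -(mul1x e); exact: sq_ge0. Qed.

(* Key estimate: (y - c e)^+ <= c^-1 y^2 for y >= 0 and c > 0.  With
   p = (y - c e)^+ one has c p <= y p (as (y - c e) p = p^2 >= 0) and
   y p <= y^2 (as p <= y). *)
Lemma ppart_sub_unit_le y (c : R) : le 0 y -> 0 < c ->
  le (ppart (y - c *: e)) (c^-1 *: mul y y).
Proof.
move=> hy hc.
set d := y - c *: e; set p := ppart d; set q := ppart (- d).
have hp : le 0 p by exact: ppart_ge0.
have hq : le 0 q by exact: ppart_ge0.
have hqp : mul q p = 0 by apply: disj_mul0 => //; rewrite meet_comm; exact: ppart_disj.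
have hdp : le 0 (mul d p).
  by rewrite -(ppart_sub d) -/p -/q mulBx hqp subr0; exact: mul_ge0.
have hcp : le (c *: p) (mul y p).
  by move: hdp; rewrite /d mulBx mulZx mul1x => h; apply/vl_subP.
have hpy : le p y.
  apply: join_lub => //; apply/vl_subP; rewrite /d opprB addrC subrK.
  exact: vl_scale_ge0 (ltW hc) unit_ge0.
have hc' : 0 <= c^-1 by rewrite invr_ge0 ltW.
have := vl_scale hc' (vl_trans hcp (mul_monor hy hpy)).
by rewrite scalerA mulVf ?scale1r // gt_eqF.
Qed.

(* For 0 <= v <= e and c > 0:  v y <= c v + c^-1 y^2, by splitting
   y <= c e + (y - c e)^+. *)
Lemma mul_unit_interval_le v y (c : R) : le 0 v -> le v e -> le 0 y -> 0 < c ->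
  le (mul v y) (c *: v + c^-1 *: mul y y).
Proof.
move=> hv hve hy hc.
have hyq : le y (c *: e + ppart (y - c *: e)).
  by have := vl_addr (c *: e) (ppart_ub (y - c *: e)); rewrite subrK addrC.
apply: vl_trans (mul_monor hv hyq) _; rewrite mulxD mulxZ mulx1.
apply: vl_addl; apply: vl_trans (ppart_sub_unit_le hy hc).
by rewrite -{2}(mul1x (ppart _)); exact: mul_monol (ppart_ge0 _) hve.
Qed.

(* For 0 <= u <= x and s > 0:  u <= s (u/s /\ e) + s^-1 x^2; this reduces
   the Lebesgue property of X to the truncations u/s /\ e. *)
Lemma truncation_bound u x (s : R) : le 0 u -> le u x -> 0 < s ->
  le u (s *: lmeet join (s^-1 *: u) e + s^-1 *: mul x x).
Proof.
move=> hu hux hs.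
have hs' : 0 <= s^-1 by rewrite invr_ge0 ltW.
set r := s^-1 *: u; set v := lmeet join r e.
have hr : le 0 r := vl_scale_ge0 hs' hu.
have hK := ppart_sub_unit_le hr ltr01.
rewrite scale1r invr1 scale1r -sub_meet /r mulZx mulxZ -/r in hK.
have hsq : le (mul u u) (mul x x).
  apply: vl_trans (mul_monor hu hux) _.
  exact: mul_monol (vl_trans hu hux) hux.
have hrv : le (r - v) (s^-1 *: (s^-1 *: mul x x)).
  exact: vl_trans hK (vl_scale hs' (vl_scale hs' hsq)).
have := vl_add2 (vl_refl (s *: v)) (vl_scale (ltW hs) hrv).
by rewrite -scalerDr addrC subrK /r !scalerKV ?gt_eqF.
Qed.

(* The truncated multiplication operators have infimum 0 in Orth(X) when
   u_a has infimum 0: a lower bound T satisfies T y <= c^-1 y^2 for all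
   c > 0, and so T y <= 0 by the Archimedean property. *)
Lemma mul_truncation_inf (I : Type) (u : I -> X) (s : R) (T : X -> X) :
  0 < s -> (forall a, le 0 (u a)) ->
  (forall z, (forall a, le z (u a)) -> le z 0) ->
  (forall a, orth_le le T (mul (lmeet join (s^-1 *: u a) e))) ->
  orth_le le T (@orth0 R X).
Proof.
move=> hs hpos hinf hT y hy; rewrite /orth0.
apply: (le0_of_small (sq_ge0 y)) => m; set c : R := m.+1%:R.
have hc : 0 < c by rewrite ltr0n.
have hc' : 0 <= c^-1 by rewrite invr_ge0 ltW.
set z := T y - c^-1 *: mul y y.
have hzv a : le (c^-1 *: z) (lmeet join (s^-1 *: u a) e).
  have hv0 : le 0 (lmeet join (s^-1 *: u a) e).
    by apply: meet_glb; [apply: vl_scale_ge0 (hpos a); rewrite invr_ge0 ltW |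
                         exact: unit_ge0].
  have h := vl_trans (hT a y hy) (mul_unit_interval_le hv0 (meet_lbr _ _) hy hc).
  move/vl_subl: h => h.
  have := vl_scale hc' h.
  by rewrite scalerK ?gt_eqF.
have hz : le ((s * c^-1) *: z) 0.
  apply: hinf => a; have := vl_scale (ltW hs) (vl_trans (hzv a) (meet_lbl _ _)).
  by rewrite scalerA scalerKV ?gt_eqF.
have hk : 0 < s * c^-1 by rewrite mulr_gt0 // invr_gt0.
have hk' : 0 <= (s * c^-1)^-1 by rewrite invr_ge0 ltW.
have := vl_scale hk' hz.
rewrite scalerK ?scaler0 ?gt_eqF //.
by move/vl_subl; rewrite add0r.
Qed.

Variable N : set (set X).
Hypothesis HN : is_locally_solid_base le join N.

Lemma base_solid U x y : N U -> U x -> le (labs join y) (labs join x) -> U y.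
Proof. by case: HN => _ [_ [_ [_ [_ H]]]] hU; apply: H. Qed.
Lemma base_add U : N U -> exists V, N V /\ forall x y, V x -> V y -> U (x + y).
Proof. by case: HN => _ [_ [_ [H _]]]; apply: H. Qed.
Lemma base_absorb U x : N U ->
  exists t : R, 0 < t /\ forall l : R, `|l| <= t -> U (l *: x).
Proof. by case: HN => _ [_ [_ [_ [H _]]]]; apply: H. Qed.

Lemma singleton_bounded x : tbounded N [set x].
Proof.
move=> W [U [hU hUW]]; have [t [ht htx]] := base_absorb x hU.
by exists t; split=> // _ ->; apply: hUW; apply: htx; rewrite ger0_norm // ltW.
Qed.

(* |v y| <= v |y| <= |y| for 0 <= v <= e, so solid sets are invariant
   under multiplication by v. *)
Lemma abs_mul_le v y : le 0 v -> le (labs join (mul v y)) (mul v (labs join y)).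
Proof.
move=> hv; apply: join_lub; first exact: mul_monor (join_ubl _ _).
by rewrite -mulxN; apply: mul_monor (join_ubr _ _).
Qed.
Lemma abs_mul_unit_interval v y : le 0 v -> le v e ->
  le (labs join (mul v y)) (labs join y).
Proof.
move=> hv hve; apply: vl_trans (abs_mul_le y hv) _.
by rewrite -{2}(mul1x (labs join y)); apply: mul_monol => //; exact: abs_ge0.
Qed.

Lemma mul_orthomorphism v : le 0 v -> is_orthomorphism le join (mul v).
Proof.
move=> hv; split; first by move=> a x y; exact: mulr_lin.
split.
  by move=> a b; exists (mul v a), (mul v b) => z h1 h2; split; apply: mul_monor.
move=> x y; rewrite /ldisj => h.
have [h1 _] := mul_disj h hv.
by apply: disj_le h1; [exact: abs_ge0 | exact: abs_mul_le | exact: abs_ge0].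
Qed.

Lemma mul_Orth_b v : le 0 v -> le v e -> Orth_b le join N (mul v).
Proof.
move=> hv hve; split; first exact: mul_orthomorphism.
move=> B hB V [U [hU hUV]].
have [t [ht htB]] := hB U (ex_intro _ U (conj hU (fun x h => h))).
exists t; split => // _ [b hb <-].
apply: hUV; rewrite -mulxZ; apply: (base_solid hU (htB b hb)).
exact: abs_mul_unit_interval.
Qed.

Lemma mul_Orth_c v : le 0 v -> le v e -> Orth_c le join N (mul v).
Proof.
move=> hv hve; split; first exact: mul_orthomorphism.
move=> V [U [hU hUV]]; exists U; split; first by exists U; split.
move=> _ [y hy <-]; apply: hUV; apply: (base_solid hU hy).
exact: abs_mul_unit_interval.
Qed.

Lemma orth_b_conv0_pointwise (I : Type) (leI : I -> I -> Prop)
  (S : I -> X -> X) x :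
  orth_b_conv0 N leI S -> net_conv0 N leI (fun a => S a x).
Proof.
move=> hS V hV; have [a0 ha0] := hS _ V (singleton_bounded x) hV.
by exists a0 => a ha; apply: (ha0 a ha); exists x.
Qed.

(* Equicontinuous convergence of homogeneous maps implies pointwise
   convergence: if S_a(t x) lies in t V then so does t S_a(x). *)
Lemma orth_c_conv0_pointwise (I : Type) (leI : I -> I -> Prop)
  (S : I -> X -> X) x :
  (forall a (t : R) y, S a (t *: y) = t *: S a y) ->
  orth_c_conv0 N leI S -> net_conv0 N leI (fun a => S a x).
Proof.
move=> hlin hS V hV.
have [U [[U' [hU' hU'U]] hU]] := hS V hV.
have [t [ht htx]] := base_absorb x hU'.
have [a0 ha0] := hU t ht.
exists a0 => a ha.
have [w hw] : [set t *: w | w in V] (S a (t *: x)).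
  apply: (ha0 a ha); exists (t *: x) => //; apply: hU'U; apply: htx.
  by rewrite ger0_norm // ltW.
by rewrite hlin => /(GRing.scalerI (lt0r_neq0 ht)) <-.
Qed.

Lemma truncations_conv0 (I : Type) (leI : I -> I -> Prop) (u : I -> X) (s : R) :
  0 < s ->
  orth_lebesgue le (Orth_b le join N) (@orth_b_conv0 R X N)
   \/ orth_lebesgue le (Orth_c le join N) (@orth_c_conv0 R X N) ->
  directed leI -> (forall a b, leI a b -> le (u b) (u a)) ->
  (forall a, le 0 (u a)) ->
  (forall z, (forall a, le z (u a)) -> le z 0) ->
  net_conv0 N leI (fun a => s *: lmeet join (s^-1 *: u a) e).
Proof.
move=> hs Hor hdir hdec hpos hinf.
set v := fun a => lmeet join (s^-1 *: u a) e.
have hs' : 0 <= s^-1 by rewrite invr_ge0 ltW.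
have hv0 a : le 0 (v a).
  exact: meet_glb (vl_scale_ge0 hs' (hpos a)) unit_ge0.
have hve a : le (v a) e := meet_lbr _ _.
have hdec' a b : leI a b -> orth_le le (mul (v b)) (mul (v a)).
  move=> hab y hy; apply: mul_monol hy _; apply: meet_mono.
    exact: vl_scale hs' (hdec _ _ hab).
  exact: vl_refl.
have hpos' a : orth_le le (@orth0 R X) (mul (v a)) := fun y hy => mul_ge0 (hv0 a) hy.
have hinf' T : (forall a, orth_le le T (mul (v a))) -> orth_le le T (@orth0 R X).
  exact: mul_truncation_inf hs hpos hinf.
have -> : (fun a => s *: v a) = (fun a => mul (v a) (s *: e)).
  by apply: funext => a; rewrite mulxZ mulx1.
case: Hor => Hor.
  apply: (orth_b_conv0_pointwise (S := fun a => mul (v a))).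
  apply: Hor hdec' hpos' (fun T _ => hinf' T) => // a.
  exact: mul_Orth_b (hv0 a) (hve a).
apply: (orth_c_conv0_pointwise (S := fun a => mul (v a))).
  by move=> a t y; exact: mulxZ.
apply: Hor hdec' hpos' (fun T _ => hinf' T) => // a.
exact: mul_Orth_c (hv0 a) (hve a).
Qed.

End FAlgebra.
End VectorLattice.

Theorem mainTheorem11 (R : realType) (X : lmodType R)
  (le : X -> X -> Prop) (join : X -> X -> X) (mul : X -> X -> X)
  (N : set (set X)) (e : X) :
  is_f_algebra le join mul ->
  is_locally_solid_base le join N ->
  (forall x, mul e x = x /\ mul x e = x) ->
  (orth_lebesgue le (Orth_b le join N) (@orth_b_conv0 R X N)
   \/ orth_lebesgue le (Orth_c le join N) (@orth_c_conv0 R X N)) ->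
  lebesgue_property le N.
Proof.
move=> HF HN He Hor I leI u hdir hdec hpos hinf V [U0 [hU0 hU0V]].
have HV : is_archimedean_vector_lattice le join by case: HF.
have [[a0] [_ [htrans hupper]]] := hdir.
(* choose U1 + U1 in U0 and s so large that s^-1 (u_a0)^2 lies in U1 *)
have [U1 [hU1 hU1add]] := base_add HN hU0.
have [t [ht htx]] := base_absorb HN (mul (u a0) (u a0)) hU1.
set s : R := (Num.truncn t^-1).+1%:R.
have hs : 0 < s by rewrite ltr0n.
have hst : s^-1 < t by rewrite invf_plt ?posrE // truncnS_gt.
have hsmall : U1 (s^-1 *: mul (u a0) (u a0)).
  apply: htx; rewrite ger0_norm; first exact: ltW.
  by rewrite invr_ge0 ltW.
(* beyond a0 and a1, u_a <= s (u_a/s /\ e) + s^-1 u_a0^2 with both terms in U1 *)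
have [a1 ha1] := truncations_conv0 HV HF He HN hs Hor hdir hdec hpos hinf
  (ex_intro _ U1 (conj hU1 (fun _ h => h))).
have [a2 [h02 h12]] := hupper a0 a1.
exists a2 => a ha.
have hbound := truncation_bound HV HF He (hpos a) (hdec _ _ (htrans _ _ _ h02 ha)) hs.
apply: hU0V; apply: (base_solid HN hU0 (hU1add _ _ (ha1 a (htrans _ _ _ h12 ha)) hsmall)).
by rewrite /= (abs_id HV (hpos a)) (abs_id HV (vl_trans HV (hpos a) hbound)).
Qed.
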